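(* Assume all hypotheses (i)–(v) of the following setting hold: (i) $(x,y)$ follow the IMCA model with parameters $(h,T,\lambda,\mu)$; (ii) $h:\mathbb{R}^d\to\mathbb{R}^d$ is invertible; (iii) each $T_i$ is differentiable and satisfies the strong exponential condition; (iv) there exist $k+1$ points $y^0,\dots,y^k$ with $L=\big(\lambda(y^1)-\lambda(y^0),\dots,\lambda(y^k)-\lambda(y^0)\big)$ invertible; (v) there are $f:\mathbb{R}^d\to\mathbb{R}^d$, differentiable $H_l:\mathbb{R}\to\mathbb{R}^{m_l}$ with $(m_1,\dots,m_d)$ a permutation of $(k_1,\dots,k_d)$, and $g:\mathcal{Y}\to\mathbb{R}^k$ with $\exp(-H(f(x))^\top g(y))/Z(y)=p(x\mid y)$ for all $x,y$, where $H(f(x))=(H_1(f_1(x)),\dots,H_d(f_d(x)))$. Assume further either (A) each $T_l$ is twice differentiable with $k_l\ge 2$ for all $l$, and both $h$ and $f$ are $\mathcal{D}^2$-diffeomorphisms; or (B) $k_l=1$ and $T_l$ is non-monotonic for all $l$, $h$ and $f$ are $C^1$-diffeomorphisms, and each $H_l$ has a unique extremum. Then there exist a permutation $\gamma$ of $\{1,\dots,d\}$ with $m_i=k_{\gamma(i)}$, invertible square matrices $A_i$ and vectors $b_i$ such that for every $i$ and every $x$, $H_i(f_i(x))=A_iT_{\gamma(i)}(z_{\gamma(i)})+b_i$, where $z=h^{-1}(x)$.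
   Context: IMCA model: a latent $z\in\mathbb{R}^d$ and an observed auxiliary variable $y\in\mathcal{Y}\subset\mathbb{R}^{d_y}$, with $z\sim p(z\mid y)$ and observation $x=h(z)$, where $p(z\mid y)=\mu(z)\exp\big(\sum_{i=1}^d T_i(z_i)^\top\lambda_i(y)-\Gamma(y)\big)$; here $\mu$ is an arbitrary (not necessarily factorized) base measure density, $T_i:\mathbb{R}\to\mathbb{R}^{k_i}$ are sufficient statistics, $\lambda_i:\mathcal{Y}\to\mathbb{R}^{k_i}$, $\Gamma(y)$ is the log-normalizer, $k=\sum_i k_i$, $T=(T_1,\dots,T_d)$, $\lambda=(\lambda_1,\dots,\lambda_d)$ stacked into $\mathbb{R}^k$. The strong exponential condition for $T_i$: for every measurable $U\subset\mathbb{R}$ and every $\eta\in\mathbb{R}^{k_i}$, if $u\mapsto T_i(u)^\top\eta$ is constant on $U$, then $U$ has Lebesgue measure zero or $\eta=0$. A $\mathcal{D}^2$-diffeomorphism is an invertible map such that all second-order cross-derivatives of the map and its inverse exist. *)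

From mathcomp Require Import all_boot all_order all_algebra all_fingroup.
From mathcomp Require Import all_classical all_reals all_analysis.
Set Implicit Arguments. Unset Strict Implicit. Unset Printing Implicit Defensive.
Import Order.TTheory GRing.Theory Num.Theory.
Import numFieldNormedType.Exports.
Local Open Scope classical_set_scope.
Local Open Scope ring_scope.

Definition evec (R : realType) (d : nat) (j : 'I_d) : 'rV[R]_d := delta_mx 0 j.

Definition strong_exponential (R : realType) (ki : nat) (Ti : R -> 'rV[R]_ki) :=
  forall (U : set R) (eta : 'rV[R]_ki), measurable U ->
    (exists c : R, forall u, U u -> (Ti u *m eta^T) 0 0 = c) ->
    (lebesgue_measure U = 0%E \/ eta = 0).

Definition monotonic (R : realType) (F : R -> R) :=
  (forall u v, u <= v -> F u <= F v) \/ (forall u v, u <= v -> F v <= F u).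

Definition is_extremum (R : realType) (F : R -> R) (t : R) :=
  (\forall s \near t, F t <= F s) \/ (\forall s \near t, F s <= F t).

Definition unique_extremum (R : realType) (F : R -> R) :=
  exists t, is_extremum F t /\ forall t', is_extremum F t' -> t' = t.

Definition partials1_exist (R : realType) (d : nat) (f : 'rV[R]_d -> 'rV[R]_d) :=
  forall (i j : 'I_d) (x : 'rV[R]_d), derivable (fun v => f v 0 i) x (evec R j).

Definition C1_diffeo (R : realType) (d : nat) (f finv : 'rV[R]_d -> 'rV[R]_d) :=
  cancel f finv /\ cancel finv f /\
  forall g, (g = f \/ g = finv) ->
    (forall x, differentiable g x) /\
    forall i j : 'I_d, continuous (fun x => 'D_(evec R j) (fun v => g v 0 i) x).

Definition D2_diffeo (R : realType) (d : nat) (f finv : 'rV[R]_d -> 'rV[R]_d) :=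
  cancel f finv /\ cancel finv f /\
  forall g, (g = f \/ g = finv) ->
    (forall x, differentiable g x) /\
    partials1_exist g /\
    forall (i j l : 'I_d) (x : 'rV[R]_d),
      derivable (fun w => 'D_(evec R j) (fun v => g v 0 i) w) x (evec R l).

(* Conditional density of z given y in the IMCA model:
   p(z|y) = mu(z) exp( sum_i T_i(z_i)^T lambda_i(y) - Gamma(y) ),
   written with the stacked vectors T(z), lambda(y) in R^k (k = sum_i k_i). *)
Definition imca_density (R : realType) (d dy : nat) (k : 'I_d -> nat)
  (mu : 'rV[R]_d -> R) (T : forall i : 'I_d, R -> 'rV[R]_(k i))
  (lam : forall i : 'I_d, 'rV[R]_dy -> 'rV[R]_(k i)) (Gam : 'rV[R]_dy -> R)
  (z : 'rV[R]_d) (y : 'rV[R]_dy) : R :=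
  mu z * expR (((mxrow (fun i => T i (z 0 i))) *m (mxrow (fun i => lam i y))^T) 0 0
               - Gam y).

(* Conditional density of x = h(z) given y (change of variables, hinv = h^{-1}):
   p(x|y) = p_z(h^{-1}(x)|y) |det J_{h^{-1}}(x)| *)
Definition obs_density (R : realType) (d dy : nat) (k : 'I_d -> nat)
  (mu : 'rV[R]_d -> R) (T : forall i : 'I_d, R -> 'rV[R]_(k i))
  (lam : forall i : 'I_d, 'rV[R]_dy -> 'rV[R]_(k i)) (Gam : 'rV[R]_dy -> R)
  (hinv : 'rV[R]_d -> 'rV[R]_d) (x : 'rV[R]_d) (y : 'rV[R]_dy) : R :=
  imca_density mu T lam Gam (hinv x) y * `| \det ('J hinv x) |.

From mathcomp Require Import all_boot all_order all_algebra all_fingroup.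
From mathcomp Require Import all_classical all_reals all_analysis.
From mathcomp Require Import lra.
Import Order.TTheory GRing.Theory Num.Theory.
Import numFieldNormedType.Exports.
Local Open Scope classical_set_scope.
Local Open Scope ring_scope.
Set Implicit Arguments. Unset Strict Implicit. Unset Printing Implicit Defensive.

(* Comparing the density identity at the k + 1 points y^0, ..., y^k gives
   H(f(h z)) = T(z) B + c with B invertible, so that the i-th block of
   H(f(h z)) is sum_l T_l(z_l) B_li + c_i.  It suffices to show that each
   block column of B has at most one nonzero block: invertibility of B then
   places the nonzero blocks along the graph of a permutation and makes each
   of them invertible.  Suppose B_l1,i and B_l2,i are both nonzero, l1 <> l2.
   (A) Differentiating in z_l shows that T_l'(z_l) B_li is parallel to
   H_i'(f_i(h z)).  Letting z_l1 and z_l2 vary separately, all the vectors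
   T_l'(u) B_li lie on a single line; since m_i >= 2 some nonzero eta is
   orthogonal to it, and the strong exponential condition then gives
   B_li eta = 0 for every l, contradicting invertibility of B.
   (B) The unique extremum t of the continuous scalar H_i is a strict global
   one, so H_i(f_i(h z)) - H_i(t) is a sum of terms of one sign.  Its zero set
   {f_i(h z) = t} is where every term vanishes; as two coordinates contribute,
   the complement is connected by segments along which f_i(h z) <> t, hence
   f_i(h z) - t has constant sign there, contradicting surjectivity of f. *)

(** * Unique extrema *)

Section UniqueExtremum.
Variable R : realType.
Implicit Types (F : R -> R) (a b c s t : R).

Lemma is_extremum_itv F a b c : c \in `]a, b[ ->
  (forall x, x \in `[a, b] -> F x <= F c) \/ (forall x, x \in `[a, b] -> F c <= F x) ->
  is_extremum F c.
Proof.
move=> cab [cmax|cmin]; [right|left]; near=> s; [apply: cmax|apply: cmin];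
  (have : s \in `]a, b[ by near: s; exact: near_in_itvoo);
  by rewrite !in_itv /= => /andP[? ?]; apply/andP; split; exact: ltW.
Unshelve. all: by end_near.
Qed.

Lemma unique_extremum_level_neq F t : continuous F ->
  (forall t', is_extremum F t' -> t' = t) -> forall s, s != t -> F s != F t.
Proof.
move=> cF uniq s st; apply/negP => /eqP Fst.
pose a := Num.min s t; pose b := Num.max s t.
have ab : a < b by rewrite /a /b; case: (ltgtP s t) st.
have Fab : F a = F b by rewrite /a /b; case: (ltgtP s t) st.
have inner_neq c : c \in `]a, b[ -> c != t.
  rewrite in_itv /= /a /b; case: (ltgtP s t) st => // + _ /andP[].
    by move=> _ _ /lt_eqF ->.
  by move=> _ /gt_eqF ->.
(* t is an endpoint of [a, b]: no inner point is an extremum, so the extreme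
   values of F on [a, b] are attained at the endpoints and F is constant there *)
have endpoint c : c \in `[a, b] ->
    (forall x, x \in `[a, b] -> F x <= F c) \/ (forall x, x \in `[a, b] -> F c <= F x) ->
    F c = F a.
  move=> cab extc; have [->//|ca] := eqVneq c a; have [->//|cb] := eqVneq c b.
  have cin : c \in `]a, b[.
    by move: cab; rewrite !in_itv /= !lt_neqAle eq_sym ca cb => /andP[-> ->].
  by have := inner_neq c cin; rewrite (uniq c (is_extremum_itv cin extc)) eqxx.
have cab : {within `[a, b], continuous F} by exact: continuous_subspaceT.
have [cM cMin FcM] := EVT_max (ltW ab) cab.
have [cm cmin Fcm] := EVT_min (ltW ab) cab.
have FM := endpoint cM cMin (or_introl FcM); have Fm := endpoint cm cmin (or_intror Fcm).
pose mid := (a + b) / 2.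
have midin : mid \in `]a, b[ by rewrite in_itv /= !(midf_lt ab).
have Fmid x : x \in `[a, b] -> F x <= F mid.
  move=> xab; apply: le_trans (FcM x xab) _; rewrite FM -Fm.
  exact/Fcm/subset_itv_oo_cc.
by have := inner_neq mid midin; rewrite (uniq mid (is_extremum_itv midin (or_introl Fmid))) eqxx.
Qed.

Lemma local_min_global F t : continuous F -> (forall s, s != t -> F s != F t) ->
  (\forall s \near t, F t <= F s) -> forall s, F t <= F s.
Proof.
move=> cF Fneq [e /= e0 Fnear] s; rewrite leNgt; apply/negP => Fst.
have st : s != t by apply: contraTneq Fst => ->; rewrite ltxx.
have cab a b : {within `[a, b], continuous F} by exact: continuous_subspaceT.
(* a point s' between s and t close to t has F s' >= F t > F s, so by the
   intermediate value theorem F takes the value F t strictly between s and t *)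
case: (ltgtP s t) st => // slt _.
- pose s' := Num.max s (t - e / 2).
  have s't : s' < t by rewrite /s' gt_max slt /= ltrBlDr ltrDl divr_gt0.
  have Fs' : F t <= F s'.
    apply: Fnear; rewrite /ball /= ger0_norm ?subr_ge0 ?(ltW s't) //.
    have : t - e / 2 <= s' by rewrite /s' le_max lexx orbT.
    lra.
  have ss' : s <= s' by rewrite /s' le_max lexx.
  have Ft : Num.min (F s) (F s') <= F t <= Num.max (F s) (F s').
    by rewrite ge_min le_max (ltW Fst) Fs' orbT.
  have [p + Fp] := IVT ss' (cab _ _) Ft; rewrite in_itv /= => /andP[_ ps'].
  by have := Fneq p (negbT (lt_eqF (le_lt_trans ps' s't))); rewrite Fp eqxx.
- pose s' := Num.min s (t + e / 2).
  have s't : t < s' by rewrite /s' lt_min slt /= ltrDl divr_gt0.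
  have Fs' : F t <= F s'.
    apply: Fnear; rewrite /ball /= ler0_norm ?subr_le0 ?(ltW s't) // opprB.
    have : s' <= t + e / 2 by rewrite /s' ge_min lexx orbT.
    lra.
  have ss' : s' <= s by rewrite /s' ge_min lexx.
  have Ft : Num.min (F s') (F s) <= F t <= Num.max (F s') (F s).
    by rewrite ge_min le_max (ltW Fst) Fs' !orbT.
  have [p + Fp] := IVT ss' (cab _ _) Ft; rewrite in_itv /= => /andP[s'p _].
  by have := Fneq p (negbT (gt_eqF (lt_le_trans s't s'p))); rewrite Fp eqxx.
Qed.

Lemma unique_extremum_strict F : continuous F -> unique_extremum F ->
  exists t e, e != 0 /\ forall s, s != t -> 0 < e * (F s - F t).
Proof.
move=> cF [t [ext uniq]]; have Fneq := unique_extremum_level_neq cF uniq.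
exists t; case: ext => [tmin|tmax].
  exists 1; split=> [|s st]; first exact: oner_neq0.
  by rewrite mul1r subr_gt0 lt_neqAle eq_sym Fneq //; exact: local_min_global.
exists (-1); split=> [|s st]; first by rewrite oppr_eq0 oner_neq0.
rewrite mulN1r opprB subr_gt0 lt_neqAle Fneq //=.
rewrite -lerN2; apply: (@local_min_global (fun x => - F x)) => [x|x xt|].
- exact/continuousN/cF.
- by rewrite eqr_opp Fneq.
- by near=> x; rewrite lerN2; near: x.
Unshelve. all: by end_near.
Qed.

End UniqueExtremum.

(** * Level sets of sums of functions of separate coordinates *)

Section LevelSets.
Variables (R : realType) (d : nat).
Implicit Types (z w : 'rV[R]_d) (l : 'I_d) (u t : R).

Definition row_set z l u : 'rV[R]_d := z + (u - z 0 l) *: evec R l.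

Lemma row_setE z l u l' : row_set z l u 0 l' = if l' == l then u else z 0 l'.
Proof.
rewrite /row_set /evec !mxE /=; case: eqVneq => [->|_]; last by rewrite mulr0 addr0.
by rewrite mulr1 addrC subrK.
Qed.

Lemma row_set_eq z l u : row_set z l u 0 l = u.
Proof. by rewrite row_setE eqxx. Qed.

Lemma row_set_neq z l u l' : l' != l -> row_set z l u 0 l' = z 0 l'.
Proof. by rewrite row_setE => /negbTE ->. Qed.

Lemma row_set_id z l : row_set z l (z 0 l) = z.
Proof. by rewrite /row_set subrr scale0r addr0. Qed.

Lemma row_exists2 l1 l2 u1 u2 : l1 != l2 -> exists z, z 0 l1 = u1 /\ z 0 l2 = u2.
Proof.
move=> l12; exists (row_set (row_set 0 l1 u1) l2 u2).
by rewrite row_set_eq row_set_neq 1?row_set_eq.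
Qed.

Variables (phi : 'rV[R]_d -> R) (t : R).
Hypothesis phi_line_cont : forall z w, continuous (fun s : R => phi (z + s *: w)).

Lemma same_side_segment z w : (forall s, phi (z + s *: (w - z)) != t) ->
  (phi z < t) = (phi w < t).
Proof.
move=> seg_neq; pose f s := phi (z + s *: (w - z)).
have f0 : f 0 = phi z by rewrite /f scale0r addr0.
have f1 : f 1 = phi w by rewrite /f scale1r addrC subrK.
have cf : {within `[0, 1], continuous f} by exact/continuous_subspaceT/phi_line_cont.
apply/eqP; apply: contraT => sides.
have tmid : Num.min (f 0) (f 1) <= t <= Num.max (f 0) (f 1).
  move: sides (seg_neq 0) (seg_neq 1); rewrite -/(f 0) -/(f 1) f0 f1.
  case: (ltgtP (phi z) t) => [a|a|->]; rewrite ?eqxx //;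
    case: (ltgtP (phi w) t) => [b|b|->]; rewrite ?eqxx //= => _ _ _;
    by rewrite ge_min le_max (ltW a) (ltW b) ?orbT.
have [s _ fs] := IVT ler01 cf tmid.
by have := seg_neq s; rewrite -/(f s) fs eqxx.
Qed.

Variable off : 'I_d -> set R.
Hypothesis level_off : forall w, phi w != t <-> exists l, off l (w 0 l).

Lemma same_side_fixed_coord z w l : z 0 l = w 0 l -> off l (z 0 l) ->
  (phi z < t) = (phi w < t).
Proof.
move=> zw zl; apply: same_side_segment => s; apply/level_off; exists l.
by rewrite !mxE -zw subrr mulr0 addr0.
Qed.

(* Two distinct coordinates that can keep phi off the level t connect every
   point off the level set to a fixed one, moving one coordinate at a time
   while the other one keeps phi off the level. *)
Lemma level_side_const l1 l2 u1 u2 : l1 != l2 -> off l1 u1 -> off l2 u2 ->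
  forall z w, phi z != t -> phi w != t -> (phi z < t) = (phi w < t).
Proof.
move=> l12 off1 off2; have [z0 [z01 z02]] := row_exists2 u1 u2 l12.
suff side z : phi z != t -> (phi z < t) = (phi z0 < t).
  by move=> z w /side -> /side ->.
move=> /level_off [l offl].
pose j := if l == l1 then l2 else l1.
have jl : j != l by rewrite /j; case: (eqVneq l l1) => [->|]; rewrite 1?eq_sym.
have offj : off j (z0 0 j) by rewrite /j; case: ifP; rewrite ?z01 ?z02.
rewrite (same_side_fixed_coord (w := row_set z j (z0 0 j)) _ offl); last first.
  by rewrite row_set_neq 1?eq_sym.
by apply: (same_side_fixed_coord (l := j)); rewrite row_set_eq.
Qed.

End LevelSets.

Lemma mulmx_rV_dim1 (F : pzRingType) n q (n1 : n = 1%N) (x : 'rV[F]_n)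
    (A : 'M[F]_(n, q)) i j :
  (x *m A) 0 j = x 0 i * A i j.
Proof. by subst n; rewrite mxE big_ord1 (ord1 i). Qed.

Lemma mx_dim1_neq0 (F : nmodType) n q (n1 : n = 1%N) (q1 : q = 1%N)
    (A : 'M[F]_(n, q)) i j :
  A != 0 -> A i j != 0.
Proof.
subst n q; apply: contraNneq => Aij; apply/eqP/matrixP => i' j'.
by move: Aij; rewrite mxE (ord1 i) (ord1 j) (ord1 i') (ord1 j').
Qed.

Section NonMonotonicSupport.
Variables (R : realType) (d : nat).

Lemma sumr_sign_neq0 n (e : R) (a : 'I_n -> R) :
  e != 0 -> (forall i, 0 <= e * a i) -> (\sum_i a i != 0) <-> exists i, a i != 0.
Proof.
move=> e0 ea; have ea_neq0 i : (0 < e * a i) = (a i != 0).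
  by rewrite lt_neqAle ea eq_sym mulf_eq0 (negbTE e0) andbT.
have -> : (\sum_i a i != 0) = (e * \sum_i a i != 0) by rewrite mulf_eq0 (negbTE e0).
rewrite mulr_sumr psumr_neq0 //.
split=> [/hasP[i _]|[i ai]]; first by rewrite ea_neq0; exists i.
by apply/hasP; exists i; rewrite ?mem_index_enum //= ea_neq0.
Qed.

Lemma unique_extremum_separable_support (tau : 'I_d -> R -> R) (n : 'I_d -> R)
    (F : R -> R) (phi : 'rV[R]_d -> R) (c : R) :
  (forall l, exists u v, tau l u != tau l v) ->
  continuous F -> unique_extremum F ->
  (forall z w, continuous (fun s : R => phi (z + s *: w))) ->
  (forall t, exists z, phi z = t) ->
  (forall z, F (phi z) = \sum_l tau l (z 0 l) * n l + c) ->
  forall l1 l2, n l1 != 0 -> n l2 != 0 -> l1 = l2.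
Proof.
move=> tau_ncst cF uF phi_cont phi_surj Fphi l1 l2 n1 n2.
apply/eqP; apply: contraT => l12.
have [t [e [e0 Fstrict]]] := unique_extremum_strict cF uF.
have [z0 z0t] := phi_surj t.
pose term l u := (tau l u - tau l (z0 0 l)) * n l.
have Fgap w : F (phi w) - F t = \sum_l term l (w 0 l).
  rewrite -z0t !Fphi opprD addrACA subrr addr0 -sumrB.
  by apply: eq_bigr => l _; rewrite /term mulrBl.
have Fge s : 0 <= e * (F s - F t).
  by have [->|st] := eqVneq s t; [rewrite subrr mulr0 | exact/ltW/Fstrict].
(* moving the single coordinate l of z0 shows that every term has the sign of e *)
have term_sign l u : 0 <= e * term l u.
  have := Fge (phi (row_set z0 l u)); rewrite Fgap (bigD1 l) //= row_set_eq big1 ?addr0 //.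
  by move=> l' /row_set_neq ->; rewrite /term subrr mul0r.
have level w : phi w != t <-> exists l, term l (w 0 l) != 0.
  apply: iff_trans (sumr_sign_neq0 e0 (fun l => term_sign l (w 0 l))).
  rewrite -Fgap subr_eq0.
  split; last by apply: contraNneq => ->.
  by move/Fstrict; apply: contraTneq => ->; rewrite subrr mulr0 ltxx.
have term_neq0 l : n l != 0 -> exists u, term l u != 0.
  move=> nl; have [u [v uv]] := tau_ncst l.
  have [uz|uz] := eqVneq (tau l u) (tau l (z0 0 l)).
    by exists v; rewrite /term mulf_neq0 // subr_eq0 -uz eq_sym.
  by exists u; rewrite /term mulf_neq0 // subr_eq0.
have [u1 term1] := term_neq0 l1 n1; have [u2 term2] := term_neq0 l2 n2.
have side := level_side_const (off := fun l u => term l u != 0) phi_cont level l12 term1 term2.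
have [zp zpt] := phi_surj (t + 1); have [zm zmt] := phi_surj (t - 1).
have tm : t - 1 < t by rewrite ltrBlDr ltrDl ltr01.
have tp : t < t + 1 by rewrite ltrDl ltr01.
have := side zm zp; rewrite zmt zpt tm ltNge (ltW tp) (lt_eqF tm) (gt_eqF tp).
by move/(_ isT isT).
Qed.

Lemma unique_extremum_block_support k p (T : forall l, R -> 'rV[R]_(k l))
    (C : forall l, 'M[R]_(k l, p)) (Hi : R -> 'rV[R]_p) (phi : 'rV[R]_d -> R)
    (c : 'rV[R]_p) :
  (forall l, k l = 1%N) -> p = 1%N ->
  (forall l (j : 'I_(k l)), ~ monotonic (fun u => T l u 0 j)) ->
  (forall u, derivable Hi u 1) ->
  (forall j : 'I_p, unique_extremum (fun t => Hi t 0 j)) ->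
  (forall z, differentiable phi z) -> (forall t, exists z, phi z = t) ->
  (forall z, Hi (phi z) = \sum_l T l (z 0 l) *m C l + c) ->
  forall l1 l2, C l1 != 0 -> C l2 != 0 -> l1 = l2.
Proof.
move=> k1 p1 Tnmon dHi uHi dphi phi_surj HiT l1 l2 C1 C2.
have [a b] : (forall l, 'I_(k l)) * 'I_p by split=> [l|]; rewrite ?k1 ?p1; exact: ord0.
apply: (@unique_extremum_separable_support (fun l u => T l u 0 (a l))
    (fun l => C l (a l) b) (fun t => Hi t 0 b) phi (c 0 b)).
- move=> l; apply: contrapT => /forallNP tau_cst; apply: (Tnmon l (a l)); left => u v _.
  have /forallNP/(_ v)/negP/negbNE/eqP -> := tau_cst u; exact: lexx.
- move=> t; apply/differentiable_continuous/derivable1_diffP.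
  by move/derivable_mxP: (dHi t); apply.
- exact: uHi.
- by move=> z w s; apply/differentiable_continuous/differentiable_comp.
- exact: phi_surj.
- move=> z; rewrite HiT !mxE summxE; congr (_ + _); apply: eq_bigr => l _.
  exact: mulmx_rV_dim1.
- exact: mx_dim1_neq0.
- exact: mx_dim1_neq0.
Qed.

End NonMonotonicSupport.

(** * Derivatives and the strong exponential condition *)

Section Derivatives.
Variable R : realType.

Lemma is_derive_mx_entry m n (g : R -> 'M[R]_(m, n)) u i j : derivable g u 1 ->
  is_derive u 1 (fun s => g s i j) ('D_1 g u i j).
Proof.
move=> dg; have /derivable_mxP/(_ i j)/derivableP := dg.
by rewrite (derive_mx dg) mxE.
Qed.

Lemma is_derive_mulmx_entry n q (g : R -> 'rV[R]_n) (Q : 'M[R]_(n, q)) u j :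
  derivable g u 1 -> is_derive u 1 (fun s => (g s *m Q) 0 j) (('D_1 g u *m Q) 0 j).
Proof.
move=> dg; have -> : (fun s => (g s *m Q) 0 j) = \sum_a (fun s => Q a j *: g s 0 a).
  by apply/funext => s; rewrite fct_sumE mxE; apply: eq_bigr => a _; exact: mulrC.
rewrite mxE; apply: is_derive_sum => a; rewrite mulrC.
by apply: is_deriveZ; exact: is_derive_mx_entry.
Qed.

Lemma derive_mulmx_eq0_cst n (g : R -> 'rV[R]_n) (Q : 'cV[R]_n) :
  (forall u, derivable g u 1) -> (forall u, 'D_1 g u *m Q = 0) ->
  forall u v, g u *m Q = g v *m Q.
Proof.
move=> dg D0 u v; apply/matrixP => i j; rewrite !ord1.
apply: (@is_derive_0_is_cst _ (fun s => (g s *m Q) 0 0)) => x.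
by have := is_derive_mulmx_entry Q 0 (dg x); rewrite D0 mxE.
Qed.

Lemma strong_exponential_cst k (T : R -> 'rV[R]_k) (Q : 'cV[R]_k) :
  strong_exponential T -> (forall u v, T u *m Q = T v *m Q) -> Q = 0.
Proof.
move=> seT TQ; have [|itv0|] := seT `[0, 1]%classic Q^T (measurable_itv _).
- by exists ((T 0 *m Q) 0 0) => u _; rewrite trmxK (TQ u 0).
- move: itv0; rewrite lebesgue_measure_itv /= lte_fin ltr01 => /eqP.
  by rewrite oppr0 -EFinD addr0 eqe oner_eq0.
- by move=> Q0; rewrite -[Q]trmxK Q0 trmx0.
Qed.

Lemma strong_exponential_derive k (T : R -> 'rV[R]_k) (Q : 'cV[R]_k) :
  strong_exponential T -> (forall u, derivable T u 1) ->
  (forall u, 'D_1 T u *m Q = 0) -> Q = 0.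
Proof. by move=> seT dT D0; apply: strong_exponential_cst seT (derive_mulmx_eq0_cst dT D0). Qed.

Lemma strong_exponential_derive_neq0 k p (T : R -> 'rV[R]_k) (C : 'M[R]_(k, p)) :
  strong_exponential T -> (forall u, derivable T u 1) -> C != 0 ->
  exists u, 'D_1 T u *m C != 0.
Proof.
move=> seT dT /negP C0; apply: contrapT => /forallNP D0; apply: C0; apply/eqP/matrixP => i j.
suff /matrixP/(_ i 0) : col j C = 0 by rewrite !mxE.
apply: strong_exponential_derive seT dT _ => u.
have /negP/negbNE/eqP Du0 := D0 u.
by rewrite colE mulmxA Du0 mul0mx.
Qed.

End Derivatives.

Lemma cV_orthogonal_exists (F : fieldType) p (w : 'rV[F]_p) : (1 < p)%N ->
  exists2 eta : 'cV[F]_p, eta != 0 & w *m eta = 0.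
Proof.
move=> p2; have : kermx w^T != 0.
  by rewrite kermx_eq0 /row_free mxrank_tr neq_ltn (leq_ltn_trans (rank_leq_row w)).
case/rowV0Pn => v /sub_kermxP vw v0; exists v^T; first by rewrite trmx_eq0.
by rewrite -[w]trmxK -trmx_mul vw trmx0.
Qed.

Lemma rV_submx_sym (F : fieldType) n (u v : 'rV[F]_n) :
  (u <= v)%MS -> u != 0 -> (v <= u)%MS.
Proof.
move=> uv u0; have := mxrankS uv; rewrite -(mxrank_leqif_sup uv) !rank_rV u0.
by case: (v != 0).
Qed.

Section CoordinateDerivatives.
Variables (R : realType) (d : nat).

Lemma differentiable_row_set (z : 'rV[R]_d) l u : differentiable (row_set z l) u.
Proof.
rewrite /row_set; apply: differentiableD; first exact: differentiable_cst.
apply: differentiableZl; apply: differentiableD => //; exact: differentiable_cst.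
Qed.

Lemma derive_row_set_submx p n (Hi : R -> 'rV[R]_p) (phi : 'rV[R]_d -> R)
    (g : R -> 'rV[R]_n) (Q : 'M[R]_(n, p)) (K : 'rV[R]_p) (z : 'rV[R]_d) l :
  (forall u, derivable Hi u 1) -> (forall z, differentiable phi z) ->
  derivable g (z 0 l) 1 -> (forall s, Hi (phi (row_set z l s)) = g s *m Q + K) ->
  ('D_1 g (z 0 l) *m Q <= 'D_1 Hi (phi z))%MS.
Proof.
move=> dHi dphi dg HiQ; pose psi s := phi (row_set z l s).
have dpsi : derivable psi (z 0 l) 1.
  apply/derivable1_diffP; apply: differentiable_comp => //; exact: differentiable_row_set.
apply/sub_rVP; exists ('D_1 psi (z 0 l)); apply/matrixP => i j; rewrite !ord1 [RHS]mxE.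
pose f s := Hi (psi s) 0 j.
have f1 : is_derive (z 0 l) 1 f (('D_1 g (z 0 l) *m Q) 0 j + 0).
  have -> : f = (fun s => (g s *m Q) 0 j) + cst (K 0 j).
    by apply/funext => s; rewrite /f /psi HiQ [LHS]mxE.
  by apply: is_deriveD; exact: is_derive_mulmx_entry.
have f2 : is_derive (z 0 l) 1 f ('D_1 Hi (psi (z 0 l)) 0 j * 'D_1 psi (z 0 l)).
  rewrite (_ : f = (fun t => Hi t 0 j) \o psi) //.
  by apply: is_derive1_comp; [exact: is_derive_mx_entry | exact: derivableP].
have := @derive_val _ _ _ _ _ _ _ f1; rewrite (@derive_val _ _ _ _ _ _ _ f2) addr0 => <-.
by rewrite /psi row_set_id mulrC.
Qed.

Lemma strong_exponential_block_support k p (T : forall l, R -> 'rV[R]_(k l))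
    (C : forall l, 'M[R]_(k l, p)) (Hi : R -> 'rV[R]_p) (phi : 'rV[R]_d -> R)
    (c : 'rV[R]_p) :
  (1 < p)%N -> (forall l u, derivable (T l) u 1) ->
  (forall l, strong_exponential (T l)) ->
  (forall u, derivable Hi u 1) -> (forall z, differentiable phi z) ->
  (forall eta : 'cV[R]_p, (forall l, C l *m eta = 0) -> eta = 0) ->
  (forall z, Hi (phi z) = \sum_l T l (z 0 l) *m C l + c) ->
  forall l1 l2, C l1 != 0 -> C l2 != 0 -> l1 = l2.
Proof.
move=> p2 dT seT dHi dphi Cinj HiT l1 l2 C1 C2; apply/eqP; apply: contraT => l12.
pose v l u := 'D_1 (T l) u *m C l.
have chain (z : 'rV[R]_d) l : (v l (z 0 l) <= 'D_1 Hi (phi z))%MS.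
  apply: (derive_row_set_submx (K := \sum_(l' | l' != l) T l' (z 0 l') *m C l' + c)) => // s.
  rewrite HiT (bigD1 l) //= row_set_eq addrA; congr (_ + _ + _).
  by apply: eq_bigr => l' l'l; rewrite row_set_neq.
have par (z : 'rV[R]_d) l l' : v l' (z 0 l') != 0 -> (v l (z 0 l) <= v l' (z 0 l'))%MS.
  by move=> v0; apply: submx_trans (chain z l) (rV_submx_sym (chain z l') v0).
have [u1 v1] := strong_exponential_derive_neq0 (seT l1) (dT l1) C1.
have [u2 v2] := strong_exponential_derive_neq0 (seT l2) (dT l2) C2.
have line l u : (v l u <= v l1 u1)%MS.
  have [->|ll1] := eqVneq l l1.
    have [z [z1 z2]] := row_exists2 u u2 l12; have [z' [z'1 z'2]] := row_exists2 u1 u2 l12.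
    rewrite -z1; apply: submx_trans (par z l1 l2 _) _; first by rewrite z2.
    rewrite z2 -z'2 -z'1; apply: par; by rewrite z'1.
  have [z [z1 z2]] := row_exists2 u u1 ll1.
  by rewrite -z1 -z2; apply: par; rewrite z2.
have [eta eta0 v1eta] := cV_orthogonal_exists (v l1 u1) p2.
have Ceta l : C l *m eta = 0.
  apply: strong_exponential_derive (seT l) (dT l) _ => u.
  rewrite mulmxA -/(v l u); have /sub_rVP[a ->] := line l u.
  by rewrite -scalemxAl v1eta scaler0.
by move: eta0; rewrite (Cinj eta Ceta) eqxx.
Qed.

End CoordinateDerivatives.

Lemma mxrow_mulmx_sum (F : pzSemiRingType) d (k : 'I_d -> nat) n
    (X : forall i, 'rV[F]_(k i)) (w : 'M[F]_(\sum_i k i, n)) :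
  mxrow X *m w = \sum_l X l *m submxcol w l.
Proof. by rewrite -{1}(submxcolK w) mul_mxrow_mxcol. Qed.

Lemma mxrow_strong_exponential_sep (R : realType) d (k : 'I_d -> nat)
    (T : forall i, R -> 'rV[R]_(k i)) (w : 'cV[R]_(\sum_i k i)) :
  (forall i, strong_exponential (T i)) ->
  (forall z1 z2 : 'rV[R]_d, mxrow (fun i => T i (z1 0 i)) *m w
                          = mxrow (fun i => T i (z2 0 i)) *m w) -> w = 0.
Proof.
move=> seT Tw; rewrite -(submxcolK w) -(mxcol0 1%N); apply: eq_mxcol => l.
apply: (strong_exponential_cst (seT l)) => u v.
have := Tw (row_set 0 l u) (row_set 0 l v); rewrite !mxrow_mulmx_sum.
rewrite (bigD1 l) //= [in RHS](bigD1 l) //= !row_set_eq.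
under [in RHS]eq_bigr => i il do rewrite row_set_neq // -(row_set_neq 0 u il).
by move/addIr.
Qed.

(** * Invertible block matrices *)

(* An affine relation X = Y N + c' whose left side separates directions is
   inverted by the left inverse of N, which is two-sided when p = q. *)
Lemma affine_relation_invertible (F : fieldType) (U : Type) p q
    (X : U -> 'rV[F]_q) (Y : U -> 'rV[F]_p) (L : 'M[F]_q) (G : 'M[F]_(p, q))
    (c : 'rV[F]_q) :
  p = q -> L \in unitmx -> (forall u, X u *m L = Y u *m G + c) ->
  (forall w : 'cV[F]_q, (forall u v, X u *m w = X v *m w) -> w = 0) ->
  exists (B : 'M[F]_(q, p)) (N : 'M[F]_(p, q)) (b : 'rV[F]_p),
    [/\ B *m N = 1%:M, N *m B = 1%:M & forall u, Y u = X u *m B + b].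
Proof.
move=> pq Lu XYL Xsep; pose N := G *m invmx L; pose c' := c *m invmx L.
have XY u : X u = Y u *m N + c' by rewrite mulmxA -mulmxDl -XYL mulmxK.
have Nfull : row_full N.
  rewrite -cokermx_eq0; apply/eqP/matrixP => i j.
  suff /matrixP/(_ i 0) : col j (cokermx N) = 0 by rewrite !mxE.
  have Ncol : N *m col j (cokermx N) = 0 by rewrite colE mulmxA mulmx_coker mul0mx.
  by apply: Xsep => u v; rewrite !XY !mulmxDl -!(mulmxA (Y _)) Ncol !mulmx0.
have [B BN] := row_fullP Nfull.
have [B' NB'] : exists B', N *m B' = 1%:M.
  by apply/row_freeP; rewrite /row_free (eqnP Nfull) pq.
have BB' : B = B' by rewrite -[B]mulmx1 -NB' mulmxA BN mul1mx.
exists B, N, (- (c' *m B)); split=> [//||u]; first by rewrite BB'.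
by rewrite XY mulmxDl -(mulmxA (Y u)) BB' NB' mulmx1 addrK.
Qed.

Lemma mulmx1_dim (F : fieldType) m n (A : 'M[F]_(m, n)) (B : 'M[F]_(n, m)) :
  A *m B = 1%:M -> B *m A = 1%:M -> m = n.
Proof.
move=> AB BA; apply/eqP; rewrite eqn_leq.
rewrite (leq_trans (@mulmx1_min_rank _ _ _ _ A 1%:M B _) (rank_leq_col A)) ?mul1mx //.
by rewrite (leq_trans (@mulmx1_min_rank _ _ _ _ A B 1%:M _) (rank_leq_row A)) ?mulmx1.
Qed.

Lemma submxblock1_diag (F : fieldType) d (p : 'I_d -> nat) i :
  submxblock (1%:M : 'M[F]_(\sum_i p i)) i i = 1%:M.
Proof.
by apply/matrixP => x y; rewrite /submxblock !mxE -val_eqE tagnat.eq_Rank eqxx /= val_eqE.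
Qed.

Lemma submxblock_mul (F : fieldType) d (p q r : 'I_d -> nat)
    (X : 'M[F]_(\sum_i p i, \sum_i q i)) (Y : 'M[F]_(\sum_i q i, \sum_i r i)) a b :
  submxblock (X *m Y) a b = \sum_j submxblock X a j *m submxblock Y j b.
Proof. by rewrite -{1}(submxblockK X) -{1}(submxblockK Y) mul_mxblock mxblockK. Qed.

Lemma submxblock_mul1_neq0 (F : fieldType) d (p q : 'I_d -> nat)
    (X : 'M[F]_(\sum_i p i, \sum_i q i)) (Y : 'M[F]_(\sum_i q i, \sum_i p i)) a :
  X *m Y = 1%:M -> (0 < p a)%N -> exists j, submxblock X a j *m submxblock Y j a != 0.
Proof.
move=> XY pa; apply: contrapT => /forallNP XY0.
have := congr1 (fun M => submxblock M a a) XY; rewrite /= submxblock_mul submxblock1_diag.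
rewrite big1 => [/matrixP/(_ (Ordinal pa) (Ordinal pa))|j _]; last first.
  by have /negP/negPn/eqP := XY0 j.
by rewrite !mxE eqxx => /eqP; rewrite eq_sym oner_eq0.
Qed.

Section BlockMatrices.
Variables (F : fieldType) (d : nat) (p q : 'I_d -> nat).

Lemma mxrow_affine_block (X : forall l, 'rV[F]_(p l)) (Y : forall i, 'rV[F]_(q i))
    (B : 'M[F]_(\sum_i p i, \sum_i q i)) (c : 'rV[F]_(\sum_i q i)) i :
  mxrow Y = mxrow X *m B + c -> Y i = \sum_l X l *m submxblock B l i + submxrow c i.
Proof.
move/(congr1 (fun M : 'rV_(\sum_j q j) => submxrow M i)).
rewrite /= mxrowK submxrowD -mul_submxrow mxrow_mulmx_sum => ->.
by congr (_ + _); apply: eq_bigr => l _; rewrite submxblockEh.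
Qed.

Lemma submxblock_col_inj (B : 'M[F]_(\sum_i p i, \sum_i q i))
    (N : 'M[F]_(\sum_i q i, \sum_i p i)) i (eta : 'cV[F]_(q i)) :
  N *m B = 1%:M -> (forall l, submxblock B l i *m eta = 0) -> eta = 0.
Proof.
move=> NB Beta; pose E := submxcol (1%:M : 'M[F]_(\sum_j q j)) i.
have EE : E *m E^T = 1%:M.
  by rewrite /E tr_submxcol trmx1 mul_submxrow mulmx1 -submxblockEv submxblock1_diag.
have BE : B *m (E^T *m eta) = 0.
  rewrite -[LHS]submxcolK -(mxcol0 1%N); apply: eq_mxcol => l.
  rewrite -submxcol_mul mulmxA /E tr_submxcol trmx1 mul_submxrow mulmx1.
  by rewrite -submxblockEv Beta.
by rewrite -[eta]mul1mx -EE -mulmxA -[E^T *m eta]mul1mx -NB -mulmxA BE !mulmx0.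
Qed.

Lemma mxblock_perm (B : 'M[F]_(\sum_i p i, \sum_i q i))
    (N : 'M[F]_(\sum_i q i, \sum_i p i)) :
  B *m N = 1%:M -> N *m B = 1%:M -> (forall l, 0 < p l)%N -> (forall i, 0 < q i)%N ->
  (forall i l1 l2, submxblock B l1 i != 0 -> submxblock B l2 i != 0 -> l1 = l2) ->
  exists gam : 'S_d, forall i, [/\ q i = p (gam i),
    forall l, l != gam i -> submxblock B l i = 0 &
    exists B', submxblock B (gam i) i *m B' = 1%:M /\ B' *m submxblock B (gam i) i = 1%:M].
Proof.
move=> BN NB ppos qpos Bsparse.
have colB i : exists l, submxblock B l i != 0.
  have [l NBl] := submxblock_mul1_neq0 NB (qpos i).
  by exists l; apply: contraNneq NBl => ->; rewrite mulmx0.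
have rowB l : exists i, submxblock B l i != 0.
  have [i BNi] := submxblock_mul1_neq0 BN (ppos l).
  by exists i; apply: contraNneq BNi => ->; rewrite mul0mx.
pose g0 i := xchoose (colB i).
have Bg0 i : submxblock B (g0 i) i != 0 by exact: (xchooseP (colB i)).
have Bsupp i l : l != g0 i -> submxblock B l i = 0.
  by apply: contraNeq => Bli; apply/eqP/(Bsparse i); rewrite ?Bg0.
pose g1 l := xchoose (rowB l).
have g1K : cancel g1 g0 by move=> l; apply/esym/(Bsparse _ _ _ (xchooseP (rowB l)) (Bg0 _)).
have [g0' _ g0'K] := injF_bij (can_inj g1K).
have g0E i : g0 i = g0' i by rewrite -{1}(g0'K i) g1K.
have g0_inj : injective g0 by move=> i j; rewrite !g0E => /(congr1 g1); rewrite !g0'K.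
exists (perm g0_inj) => i; rewrite permE.
have AB : submxblock B (g0 i) i *m submxblock N i (g0 i) = 1%:M.
  have := congr1 (fun M => submxblock M (g0 i) (g0 i)) BN.
  rewrite /= submxblock_mul submxblock1_diag.
  rewrite (bigD1 i) //= big1 ?addr0 // => j ji.
  by rewrite Bsupp ?mul0mx // (inj_eq g0_inj) eq_sym.
have BA : submxblock N i (g0 i) *m submxblock B (g0 i) i = 1%:M.
  have := congr1 (fun M => submxblock M i i) NB; rewrite /= submxblock_mul submxblock1_diag.
  by rewrite (bigD1 (g0 i)) //= big1 ?addr0 // => l li; rewrite Bsupp ?mulmx0.
split; [exact: esym (mulmx1_dim AB BA) | exact: Bsupp | by exists (submxblock N i (g0 i))].
Qed.

End BlockMatrices.

(** * The density identity *)

Lemma expR_ratio_eq (R : realType) (a b a' b' P Z Z' : R) : 0 < Z -> 0 < Z' ->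
  expR a / Z = P * expR b -> expR a' / Z' = P * expR b' ->
  a - ln Z - b = a' - ln Z' - b'.
Proof.
move=> Z0 Z'0 E E'; apply: expR_inj.
by rewrite !expRB !lnK ?posrE // E E' !mulfK // gt_eqF ?expR_gt0.
Qed.

Lemma mulmx_matrix_rows (F : pzRingType) n q (x : 'rV[F]_n) (V : 'I_q -> 'rV[F]_n) b :
  (x *m \matrix_(a, b) V b 0 a) 0 b = (x *m (V b)^T) 0 0.
Proof. by rewrite !mxE; apply: eq_bigr => a _; rewrite !mxE. Qed.

Section IMCA.
Variables (R : realType) (d dy : nat) (k m : 'I_d -> nat) (Ys : set 'rV[R]_dy).
Variables (hinv : 'rV[R]_d -> 'rV[R]_d) (mu : 'rV[R]_d -> R).
Variables (T : forall i : 'I_d, R -> 'rV[R]_(k i)).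
Variables (lam : forall i : 'I_d, 'rV[R]_dy -> 'rV[R]_(k i)) (Gam : 'rV[R]_dy -> R).
Variables (f : 'rV[R]_d -> 'rV[R]_d) (H : forall l : 'I_d, R -> 'rV[R]_(m l)).
Variables (g : 'rV[R]_dy -> 'rV[R]_(\sum_(l < d) m l)) (Z : 'rV[R]_dy -> R).

Let Tz (z : 'rV[R]_d) := mxrow (fun i => T i (z 0 i)).
Let Hx (x : 'rV[R]_d) := mxrow (fun l => H l (f x 0 l)).
Let Lam (y : 'rV[R]_dy) := mxrow (fun i => lam i y).

Hypothesis Zpos : forall y, Ys y -> 0 < Z y.
Hypothesis density : forall x y, Ys y ->
  expR (- (Hx x *m (g y)^T) 0 0) / Z y = obs_density mu T lam Gam hinv x y.

Lemma density_exponent_diff x y y' : Ys y -> Ys y' ->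
  (Tz (hinv x) *m (Lam y - Lam y')^T) 0 0
  = - (Hx x *m (g y - g y')^T) 0 0 + (ln (Z y') - ln (Z y) + Gam y - Gam y').
Proof.
move=> Yy Yy'; have dens y0 : Ys y0 -> expR (- (Hx x *m (g y0)^T) 0 0) / Z y0
    = mu (hinv x) * `|\det ('J hinv x)| * expR ((Tz (hinv x) *m (Lam y0)^T) 0 0 - Gam y0).
  by move=> Yy0; rewrite density // /obs_density /imca_density mulrAC.
have := expR_ratio_eq (Zpos Yy) (Zpos Yy') (dens _ Yy) (dens _ Yy').
rewrite !linearB ?mulmxBr /= !mxE; lra.
Qed.

Variable h : 'rV[R]_d -> 'rV[R]_d.
Hypothesis hK : cancel h hinv.

Lemma density_affine :
  (forall i, strong_exponential (T i)) ->
  (exists ys : 'I_(\sum_(i < d) k i).+1 -> 'rV[R]_dy,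
     (forall j, Ys (ys j)) /\
     (\matrix_(a, b) (Lam (ys (lift ord0 b)) - Lam (ys ord0)) 0 a) \in unitmx) ->
  (exists s : 'S_d, forall l, m l = k (s l)) ->
  exists (B : 'M[R]_(\sum_(i < d) k i, \sum_(l < d) m l))
         (N : 'M[R]_(\sum_(l < d) m l, \sum_(i < d) k i)) (c : 'rV[R]_(\sum_(l < d) m l)),
    [/\ B *m N = 1%:M, N *m B = 1%:M & forall z, Hx (h z) = Tz z *m B + c].
Proof.
move=> seT [ys [Yys Lu]] [s ms].
have km : (\sum_(l < d) m l = \sum_(i < d) k i)%N.
  by rewrite [RHS](reindex_inj (@perm_inj _ s)); apply: eq_bigr => l _; exact: ms.
pose G := \matrix_(a, b) (g (ys (lift ord0 b)) - g (ys ord0)) 0 a.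
pose c := \row_b (ln (Z (ys ord0)) - ln (Z (ys (lift ord0 b)))
                  + Gam (ys (lift ord0 b)) - Gam (ys ord0)).
apply: (affine_relation_invertible (G := - G) (c := c) km Lu) => [z|w]; last first.
  exact: mxrow_strong_exponential_sep seT.
apply/rowP => b; rewrite (mulmx_matrix_rows _ (fun b => Lam (ys (lift ord0 b)) - Lam (ys ord0))).
rewrite [in RHS]mxE mulmxN [in RHS]mxE.
rewrite (mulmx_matrix_rows _ (fun b => g (ys (lift ord0 b)) - g (ys ord0))).
have := density_exponent_diff (h z) (Yys (lift ord0 b)) (Yys ord0).
by rewrite hK => ->; rewrite !mxE.
Qed.

End IMCA.

Theorem mainTheorem9 (R : realType) (d dy : nat) (k m : 'I_d -> nat)
  (Ys : set 'rV[R]_dy)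
  (h hinv : 'rV[R]_d -> 'rV[R]_d)
  (mu : 'rV[R]_d -> R)
  (T : forall i : 'I_d, R -> 'rV[R]_(k i))
  (lam : forall i : 'I_d, 'rV[R]_dy -> 'rV[R]_(k i))
  (Gam : 'rV[R]_dy -> R)
  (f : 'rV[R]_d -> 'rV[R]_d)
  (H : forall l : 'I_d, R -> 'rV[R]_(m l))
  (g : 'rV[R]_dy -> 'rV[R]_(\sum_(l < d) m l))
  (Z : 'rV[R]_dy -> R) :
  (* (i) IMCA model: mu is a (nonnegative) base density *)
  (forall z, 0 <= mu z) ->
  (* (ii) h invertible, with inverse hinv *)
  cancel h hinv -> cancel hinv h ->
  (* (iii) each T_i differentiable and strongly exponential *)
  (forall i u, derivable (T i) u 1) ->
  (forall i, strong_exponential (T i)) ->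
  (* (iv) k+1 points y^0..y^k in Y with L invertible *)
  (exists ys : 'I_(\sum_(i < d) k i).+1 -> 'rV[R]_dy,
     (forall j, Ys (ys j)) /\
     (\matrix_(a, b) (mxrow (fun i => lam i (ys (lift ord0 b)))
                     - mxrow (fun i => lam i (ys ord0))) 0 a) \in unitmx) ->
  (* (v) f, differentiable H_l, (m_l) a permutation of (k_l), g, Z *)
  (forall l u, derivable (H l) u 1) ->
  (exists s : 'S_d, forall l, m l = k (s l)) ->
  (forall y, Ys y -> 0 < Z y) ->
  (forall x y, Ys y ->
     expR (- ((mxrow (fun l => H l (f x 0 l))) *m (g y)^T) 0 0) / Z y
     = obs_density mu T lam Gam hinv x y) ->
  (* case (A) or case (B) *)
  ((forall l, (2 <= k l)%N) /\
   (forall l u, derivable (derive1 (T l)) u 1) /\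
   D2_diffeo h hinv /\ (exists finv, D2_diffeo f finv))
  \/
  ((forall l, k l = 1%N) /\
   (forall l (j : 'I_(k l)), ~ monotonic (fun u => T l u 0 j)) /\
   C1_diffeo h hinv /\ (exists finv, C1_diffeo f finv) /\
   (forall l (j : 'I_(m l)), unique_extremum (fun t => H l t 0 j))) ->
  exists gam : 'S_d, forall i : 'I_d,
    m i = k (gam i) /\
    exists (A : 'M[R]_(k (gam i), m i)) (b : 'rV[R]_(m i)),
      (exists B : 'M[R]_(m i, k (gam i)), A *m B = 1%:M /\ B *m A = 1%:M) /\
      forall x, H i (f x 0 i) = T (gam i) (hinv x 0 (gam i)) *m A + b.
Proof.
move=> _ hK hK' dT seT Lu dH [s ms] Zpos density cases.
have [B [N [c [BN NB HT]]]] := density_affine Zpos density hK seT Lu (ex_intro _ s ms).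
have HiT i z : H i (f (h z) 0 i) = \sum_l T l (z 0 l) *m submxblock B l i + submxrow c i.
  exact: (mxrow_affine_block i (HT z)).
have [kpos dh df] : [/\ forall l, (0 < k l)%N, forall x, differentiable h x
    & forall x, differentiable f x].
  case: cases => [[k2 [_ [[_ [_ dh]] [finv [_ [_ df]]]]]]
                 |[k1 [_ [[_ [_ dh]] [[finv [_ [_ df]]] _]]]]].
    by split=> [l||]; [exact: leq_trans (k2 l) | exact: (dh h (or_introl erefl)).1
                      | exact: (df f (or_introl erefl)).1].
  by split=> [l||]; [rewrite k1 | exact: (dh h (or_introl erefl)).1
                    | exact: (df f (or_introl erefl)).1].
have mpos i : (0 < m i)%N by rewrite ms.
have dphi i z : differentiable (fun z => f (h z) 0 i) z.
  rewrite (_ : (fun z => f (h z) 0 i) = (fun M : 'rV[R]_d => M 0 i) \o (f \o h)) //.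
  by apply: differentiable_comp; [exact: differentiable_comp | exact: differentiable_coord].
have Bsparse i l1 l2 : submxblock B l1 i != 0 -> submxblock B l2 i != 0 -> l1 = l2.
  have Cinj := submxblock_col_inj (i := i) NB.
  case: cases => [[k2 _]|[k1 [Tnmon [_ [[finv [_ [finvK _]]] Hext]]]]].
    by apply: (strong_exponential_block_support _ dT seT (dH i) (dphi i) Cinj (HiT i)); rewrite ms.
  apply: (unique_extremum_block_support k1 _ Tnmon (dH i) (Hext i) (dphi i) _ (HiT i)).
    by rewrite ms k1.
  move=> t; exists (hinv (finv (t *: evec R i))).
  by rewrite hK' finvK /evec !mxE !eqxx /= mulr1.
have [gam gamP] := mxblock_perm BN NB kpos mpos Bsparse.
exists gam => i; have [mk Bz [A' AA']] := gamP i.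
split=> //; exists (submxblock B (gam i) i), (submxrow c i); split; first by exists A'.
move=> x; rewrite -{1}[x]hK' HiT (bigD1 (gam i)) //= big1 ?addr0 // => l lg.
by rewrite Bz ?mulmx0.
Qed.
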